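(* Fix a flow monoid $\mathbb{M}$. The set $\mathit{FG}$ of all flow graphs over $\mathbb{M}$, with the partial composition $*$, forms a separation algebra with unit set $\{h_\emptyset\}$, where $h_\emptyset=(\emptyset,\emptyset,\emptyset)$. That is, $*$ is commutative ($h_1\# h_2$ iff $h_2\# h_1$, and then $h_1*h_2=h_2*h_1$), associative ($h_2\# h_3$ and $h_1\#(h_2*h_3)$ hold iff $h_1\# h_2$ and $(h_1*h_2)\# h_3$ hold, and then $h_1*(h_2*h_3)=(h_1*h_2)*h_3$), and $h_\emptyset\# h$ with $h_\emptyset * h=h$ for every flow graph $h$.
   Context: A flow monoid is a commutative monoid $(\mathbb{M},+,0)$ such that the relation $n\le m :\iff \exists o.\ m=n+o$ is a partial order in which every ascending chain $K$ has a least upper bound $\bigsqcup K$, and $n+\bigsqcup K=\bigsqcup(n+K)$. A function $f:\mathbb{M}\to\mathbb{M}$ is continuous if it commutes with least upper bounds of ascending chains; $\mathcal{C}(\mathbb{M}\to\mathbb{M})$ is the set of continuous functions. Infinite sums denote least upper bounds of the ascending chain of finite partial sums; empty sums are $0$. A flow graph is a tuple $h=(X,E,\mathit{in})$ with $X\subseteq\mathbb{N}$ finite, edges $E:X\times\mathbb{N}\to\mathcal{C}(\mathbb{M}\to\mathbb{M})$, and inflow $\mathit{in}:(\mathbb{N}\setminus X)\times X\to\mathbb{M}$. Write $\mathit{in}_x=\sum_{y\in\mathbb{N}\setminus X}\mathit{in}(y,x)$. The flow $h.\mathit{flow}:X\to\mathbb{M}$ is the least function satisfying $\mathit{flow}(x)=\mathit{in}_x+\sum_{y\in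 X}E(y,x)(\mathit{flow}(y))$ for all $x\in X$. The outflow is $h.\mathit{out}:X\times(\mathbb{N}\setminus X)\to\mathbb{M}$, $h.\mathit{out}(x,y)=E(x,y)(h.\mathit{flow}(x))$. Composition: for $h_i=(X_i,E_i,\mathit{in}_i)$, write $h_1\#\#h_2$ if $X_1\cap X_2=\emptyset$ and for all $x\in X_1,y\in X_2$: $h_1.\mathit{out}(x,y)=\mathit{in}_2(x,y)$ and $h_2.\mathit{out}(y,x)=\mathit{in}_1(y,x)$. Then $h_1\uplus h_2=(X_1\uplus X_2,E_1\uplus E_2,(\mathit{in}_1\uplus\mathit{in}_2)|_{(\mathbb{N}\setminus(X_1\uplus X_2))\times(X_1\uplus X_2)})$. Composition is defined, written $h_1\# h_2$, iff $h_1\#\#h_2$ and $h_1.\mathit{flow}\uplus h_2.\mathit{flow}=(h_1\uplus h_2).\mathit{flow}$; in that case $h_1*h_2=h_1\uplus h_2$. *)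

From mathcomp Require Import all_boot.
From mathcomp Require Import finmap.
From Stdlib Require Import ClassicalEpsilon.

Set Implicit Arguments.
Unset Strict Implicit.
Unset Printing Implicit Defensive.

Local Open Scope fset_scope.

Section MonoidDefs.
Variables (T : Type) (add : T -> T -> T) (zero : T).

Definition mle (n m : T) : Prop := exists o, m = add n o.

Definition ascending (K : nat -> T) : Prop := forall i, mle (K i) (K i.+1).

Definition is_lub (K : nat -> T) (l : T) : Prop :=
  (forall i, mle (K i) l) /\ (forall u, (forall i, mle (K i) u) -> mle l u).

End MonoidDefs.

Record flowMonoid := FlowMonoid {
  fm_car :> Type;
  fm_add : fm_car -> fm_car -> fm_car;
  fm_zero : fm_car;
  fm_addC : forall a b, fm_add a b = fm_add b a;
  fm_addA : forall a b c, fm_add a (fm_add b c) = fm_add (fm_add a b) c;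
  fm_add0 : forall a, fm_add fm_zero a = a;
  fm_antisym : forall a b, mle fm_add a b -> mle fm_add b a -> a = b;
  fm_complete : forall K, ascending fm_add K -> exists l, is_lub fm_add K l;
  fm_addlub : forall n K l, ascending fm_add K -> is_lub fm_add K l ->
      is_lub fm_add (fun i => fm_add n (K i)) (fm_add n l)
}.

Section FlowGraphs.
Variable M : flowMonoid.

Local Notation madd := (@fm_add M).
Local Notation mzero := (fm_zero M).

Definition continuous (f : M -> M) : Prop :=
  forall (K : nat -> M) (l : M), ascending madd K -> is_lub madd K l ->
    is_lub madd (fun i => f (K i)) (f l).

Definition lub (K : nat -> M) : M :=
  epsilon (inhabits mzero) (fun l => is_lub madd K l).

Definition msum (s : seq M) : M := foldr madd mzero s.

(* ---------- Flow graphs ----------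
   A flow graph (X, E, in) with  E : X x N -> C(M -> M)  and
   in : (N \ X) x X -> M  is encoded by total functions that are
   normalised outside their domain (E x _ = 0-map for x \notin X,
   in y x = 0 unless y \notin X and x \in X). *)
Record flowGraph := FlowGraph {
  fg_X : {fset nat};
  fg_E : nat -> nat -> M -> M;
  fg_in : nat -> nat -> M;
  fg_Econt : forall x y, continuous (fg_E x y);
  fg_Eout : forall x y, x \notin fg_X -> fg_E x y = (fun _ => mzero);
  fg_inout : forall y x, (y \in fg_X) || (x \notin fg_X) -> fg_in y x = mzero
}.

(* in_x = sum_{y in N \ X} in(y, x): lub of the finite partial sums *)
Definition inflow (h : flowGraph) (x : nat) : M :=
  lub (fun n => msum [seq fg_in h y x | y <- iota 0 n & y \notin fg_X h]).

Definition flow_eq (h : flowGraph) (f : nat -> M) : Prop :=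
  forall x, x \in fg_X h ->
    f x = madd (inflow h x) (msum [seq fg_E h y x (f y) | y <- enum_fset (fg_X h)]).

Definition least_flow (h : flowGraph) (f : nat -> M) : Prop :=
  flow_eq h f /\
  (forall g, flow_eq h g -> forall x, x \in fg_X h -> mle madd (f x) (g x)).

(* h.flow : the least solution (only its values on X are meaningful) *)
Definition flow (h : flowGraph) : nat -> M :=
  epsilon (inhabits (fun _ => mzero)) (least_flow h).

(* h.out(x, y) = E(x, y)(h.flow(x)) for x in X, y notin X *)
Definition outflow (h : flowGraph) (x y : nat) : M := fg_E h x y (flow h x).

Lemma mle_refl (a : M) : mle madd a a.
Proof. by exists mzero; rewrite fm_addC fm_add0. Qed.

Lemma continuous0 : continuous (fun _ : M => mzero).
Proof.
move=> K l _ _; split=> [i|u Hu]; first exact: mle_refl.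
exact: (Hu 0%N).
Qed.

Definition fg_empty : flowGraph.
Proof.
refine (@FlowGraph fset0 (fun _ _ _ => mzero) (fun _ _ => mzero) _ _ _).
- move=> x y; exact: continuous0.
- by [].
- by [].
Defined.

Definition union_E (h1 h2 : flowGraph) (x y : nat) : M -> M :=
  if x \in fg_X h1 then fg_E h1 x y else fg_E h2 x y.

Definition union_in (h1 h2 : flowGraph) (y x : nat) : M :=
  if (y \notin fg_X h1 `|` fg_X h2) && (x \in fg_X h1 `|` fg_X h2) then
    (if x \in fg_X h1 then fg_in h1 y x else fg_in h2 y x)
  else mzero.

Definition fg_union (h1 h2 : flowGraph) : flowGraph.
Proof.
refine (@FlowGraph (fg_X h1 `|` fg_X h2) (union_E h1 h2) (union_in h1 h2) _ _ _).
- move=> x y; rewrite /union_E; case: (x \in fg_X h1); exact: fg_Econt.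
- move=> x y; rewrite in_fsetU negb_or /union_E => /andP [H1 H2].
  by rewrite (negbTE H1); apply: fg_Eout.
- move=> y x H; rewrite /union_in.
  case/orP: H => H; first by rewrite H.
  by rewrite (negbTE H) andbF.
Defined.

Definition compat (h1 h2 : flowGraph) : Prop :=
  [disjoint fg_X h1 & fg_X h2] /\
  (forall x y, x \in fg_X h1 -> y \in fg_X h2 -> outflow h1 x y = fg_in h2 x y) /\
  (forall y x, y \in fg_X h2 -> x \in fg_X h1 -> outflow h2 y x = fg_in h1 y x).

Definition composable (h1 h2 : flowGraph) : Prop :=
  compat h1 h2 /\
  (forall x, x \in fg_X h1 `|` fg_X h2 ->
     (if x \in fg_X h1 then flow h1 x else flow h2 x) = flow (fg_union h1 h2) x).

End FlowGraphs.

(* The only non-trivial law is associativity, and its heart is a restriction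
   property of flows (flow_restrict): if a flow graph A is one half of a
   disjoint union A ⊎ B, and the inflow that A receives from B is exactly what
   B sends along its edges under the flow of A ⊎ B, then the flow of A agrees
   with the flow of A ⊎ B on the nodes of A.  It is proved by comparing least
   fixpoints in both directions: the union flow solves the flow equation of A,
   and patching the flow of A into the union flow gives a pre-fixpoint of the
   flow equation of A ⊎ B.

   The
   backward implication and commutativity follow by symmetry, and the empty
   flow graph is a unit because the union with it is the identity. *)

From HB Require Import structures.
From mathcomp Require Import all_boot finmap.
From Stdlib Require Import ClassicalEpsilon ProofIrrelevance FunctionalExtensionality.

Set Implicit Arguments.
Unset Strict Implicit.
Unset Printing Implicit Defensive.

Local Open Scope fset_scope.

Section FlowGraphTheory.
Variable M : flowMonoid.

Local Notation madd := (@fm_add M).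
Local Notation mzero := (fm_zero M).
Local Notation mle := (mle madd).

HB.instance Definition _ :=
  Monoid.isComLaw.Build (fm_car M) mzero madd (@fm_addA M) (@fm_addC M) (@fm_add0 M).

Lemma maddA : associative madd. Proof. exact: fm_addA. Qed.
Lemma maddC : commutative madd. Proof. exact: fm_addC. Qed.
Lemma add0m : left_id mzero madd. Proof. exact: fm_add0. Qed.
Lemma addm0 : right_id mzero madd. Proof. by move=> a; rewrite maddC add0m. Qed.

Lemma maddAC a b c : madd (madd a b) c = madd (madd a c) b.
Proof. by rewrite -maddA [madd b c]maddC maddA. Qed.

Lemma mle_trans a b c : mle a b -> mle b c -> mle a c.
Proof. by move=> [o ->] [o' ->]; exists (madd o o'); rewrite maddA. Qed.

Lemma mle_eq a b : a = b -> mle a b.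
Proof. by move=> ->; apply: mle_refl. Qed.

Lemma mle0 a : mle mzero a.
Proof. by exists a; rewrite add0m. Qed.

Lemma mle_addl c a b : mle a b -> mle (madd c a) (madd c b).
Proof. by move=> [o ->]; exists o; rewrite maddA. Qed.

Lemma mle_add a b c d : mle a b -> mle c d -> mle (madd a c) (madd b d).
Proof.
move=> Hab Hcd; apply: mle_trans (mle_addl _ Hcd).
by rewrite ![madd _ c]maddC; apply: mle_addl.
Qed.

Lemma mle_big (s : seq nat) (F G : nat -> M) :
  (forall i, i \in s -> mle (F i) (G i)) ->
  mle (\big[madd/mzero]_(i <- s) F i) (\big[madd/mzero]_(i <- s) G i).
Proof.
elim: s => [|x s IH] H; first by rewrite !big_nil; apply: mle_refl.
rewrite !big_cons; apply: mle_add; first by apply: H; rewrite mem_head.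
by apply: IH => i Hi; apply: H; rewrite inE Hi orbT.
Qed.

Lemma msumE (T : Type) (s : seq T) (g : T -> M) :
  msum [seq g y | y <- s] = \big[madd/mzero]_(y <- s) g y.
Proof. by elim: s => [|y s IH]; rewrite ?big_nil ?big_cons //= IH. Qed.

Lemma lub_spec K : ascending madd K -> is_lub madd K (lub K).
Proof. by move=> HK; rewrite /lub; apply: epsilon_spec; exact: fm_complete. Qed.

Lemma is_lub_unique K l l' : is_lub madd K l -> is_lub madd K l' -> l = l'.
Proof. by move=> [Hub Hl] [Hub' Hl']; apply: fm_antisym; [apply: Hl | apply: Hl']. Qed.

Lemma chain_mono K : ascending madd K -> forall i j, i <= j -> mle (K i) (K j).
Proof.
move=> HK i; elim=> [|j IH]; first by rewrite leqn0 => /eqP ->; apply: mle_refl.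
rewrite leq_eqVlt ltnS => /orP [/eqP ->|Hij]; first exact: mle_refl.
exact: mle_trans (IH Hij) (HK j).
Qed.

Lemma lub_shift K l :
  ascending madd K -> is_lub madd (fun n => K n.+1) l -> is_lub madd K l.
Proof.
move=> HK [Hub Hleast]; split=> [i|u Hu]; first exact: mle_trans (HK i) (Hub i).
by apply: Hleast => i; apply: Hu.
Qed.

Lemma lub_eventually K N c :
  ascending madd K -> (forall n, N <= n -> K n = c) -> is_lub madd K c.
Proof.
move=> HK Hc; split=> [i|u Hu]; last by rewrite -(Hc N).
rewrite -(Hc (maxn i N)) ?leq_maxr //; apply: chain_mono => //; exact: leq_maxl.
Qed.

Lemma lub_add K L k l : ascending madd K -> ascending madd L ->
  is_lub madd K k -> is_lub madd L l ->
  is_lub madd (fun i => madd (K i) (L i)) (madd k l).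
Proof.
move=> HK HL Hk Hl; split=> [i|u Hu].
  by apply: mle_add; [apply: Hk.1 | apply: Hl.1].
apply: (fm_addlub k HL Hl).2 => j; rewrite maddC.
apply: (fm_addlub (L j) HK Hk).2 => i; rewrite maddC.
apply: mle_trans (Hu (maxn i j)).
by apply: mle_add; apply: chain_mono; rewrite ?leq_maxl ?leq_maxr.
Qed.

Lemma lub_big (s : seq nat) (K : nat -> nat -> M) (l : nat -> M) :
  (forall y, ascending madd (K y)) -> (forall y, is_lub madd (K y) (l y)) ->
  ascending madd (fun n => \big[madd/mzero]_(y <- s) K y n) /\
  is_lub madd (fun n => \big[madd/mzero]_(y <- s) K y n)
         (\big[madd/mzero]_(y <- s) l y).
Proof.
move=> HK Hl; elim: s => [|x s [IHasc IHlub]].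
  split=> [i|]; first by rewrite !big_nil; apply: mle_refl.
  by split=> [i|u /(_ 0)]; rewrite !big_nil //; apply: mle_refl.
rewrite big_cons.
have -> : (fun n => \big[madd/mzero]_(y <- x :: s) K y n) =
          (fun n => madd (K x n) (\big[madd/mzero]_(y <- s) K y n)).
  by apply: functional_extensionality => n; rewrite big_cons.
split; last exact: lub_add.
by move=> i; apply: mle_add; [apply: HK | apply: IHasc].
Qed.

(* The right-hand side of the flow equation
   of h is the monotone, continuous operator flow_step h; its Kleene
   iteration from 0 converges to the least pre-fixpoint, which is the flow. *)

Definition edge_sum (h : flowGraph M) (a : nat -> M) (x : nat) : M :=
  \big[madd/mzero]_(y <- enum_fset (fg_X h)) fg_E h y x (a y).

Definition flow_step (h : flowGraph M) (a : nat -> M) (x : nat) : M :=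
  madd (inflow h x) (edge_sum h a x).

Lemma eq_edge_sum h a b x :
  (forall y, y \in fg_X h -> a y = b y) -> edge_sum h a x = edge_sum h b x.
Proof. by move=> Hab; apply: eq_big_seq => y Hy; rewrite Hab. Qed.

Section Kleene.
Variable h : flowGraph M.

Lemma flow_eqE f : flow_eq h f <-> forall x, x \in fg_X h -> f x = flow_step h f x.
Proof. by split=> H x Hx; rewrite H // ?msumE // -msumE. Qed.

(* Continuous functions are monotone (apply continuity to the chain a, b, b, ...). *)
Lemma edge_mono x y a b : mle a b -> mle (fg_E h x y a) (fg_E h x y b).
Proof.
move=> Hab; pose K i := if i is 0 then a else b.
have HK : ascending madd K by case=> [|i] //=; apply: mle_refl.
have Hl : is_lub madd K b by split=> [[|i]|u /(_ 1)] //=; apply: mle_refl.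
exact: ((fg_Econt h x y HK Hl).1 0).
Qed.

Lemma flow_step_mono a b : (forall y, y \in fg_X h -> mle (a y) (b y)) ->
  forall x, mle (flow_step h a x) (flow_step h b x).
Proof.
by move=> Hab x; apply: mle_addl; apply: mle_big => y Hy; apply: edge_mono; apply: Hab.
Qed.

Definition kleene_iter (n : nat) : nat -> M := iter n (flow_step h) (fun _ => mzero).

Lemma kleene_iter_asc x : ascending madd (fun n => kleene_iter n x).
Proof.
move=> n; elim: n x => [|n IH] x; first exact: mle0.
by apply: flow_step_mono => y _; apply: IH.
Qed.

Definition kleene_lim (x : nat) : M := lub (fun n => kleene_iter n x).

Lemma kleene_lim_lub x : is_lub madd (fun n => kleene_iter n x) (kleene_lim x).
Proof. exact: lub_spec (kleene_iter_asc x). Qed.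

(* By continuity, flow_step commutes with the limit of the iteration. *)
Lemma kleene_lim_fix x : flow_step h kleene_lim x = kleene_lim x.
Proof.
have Hasc y : ascending madd (fun n => fg_E h y x (kleene_iter n y)).
  by move=> n; apply: edge_mono; apply: kleene_iter_asc.
have Hlub y : is_lub madd (fun n => fg_E h y x (kleene_iter n y))
                          (fg_E h y x (kleene_lim y)).
  exact: fg_Econt (kleene_iter_asc y) (kleene_lim_lub y).
have [Hsasc Hslub] := lub_big (enum_fset (fg_X h)) Hasc Hlub.
apply: is_lub_unique (kleene_lim_lub x).
exact: lub_shift (kleene_iter_asc x) (fm_addlub (inflow h x) Hsasc Hslub).
Qed.

(* Every pre-fixpoint bounds all iterates, hence the limit. *)
Lemma kleene_lim_le g : (forall x, x \in fg_X h -> mle (flow_step h g x) (g x)) ->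
  forall x, x \in fg_X h -> mle (kleene_lim x) (g x).
Proof.
move=> Hg.
have Hiter n x : x \in fg_X h -> mle (kleene_iter n x) (g x).
  elim: n x => [|n IH] x Hx; first exact: mle0.
  apply: mle_trans (Hg x Hx); apply: flow_step_mono => y Hy; exact: IH.
by move=> x Hx; apply: (kleene_lim_lub x).2 => n; apply: Hiter.
Qed.

Lemma kleene_least : least_flow h kleene_lim.
Proof.
split; first by apply/flow_eqE => x _; rewrite kleene_lim_fix.
by move=> g /flow_eqE Hg; apply: kleene_lim_le => x Hx; rewrite -Hg //; apply: mle_refl.
Qed.

Lemma flow_least : least_flow h (flow h).
Proof.
by rewrite /flow; apply: epsilon_spec; exists kleene_lim; apply: kleene_least.
Qed.

Lemma flow_fix x : x \in fg_X h -> flow h x = flow_step h (flow h) x.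
Proof. by case: flow_least => /flow_eqE Hfix _; apply: Hfix. Qed.

Lemma flow_le g : (forall x, x \in fg_X h -> mle (flow_step h g x) (g x)) ->
  forall x, x \in fg_X h -> mle (flow h x) (g x).
Proof.
move=> Hg x Hx; apply: mle_trans (kleene_lim_le Hg Hx).
by apply: flow_least.2 => //; apply: kleene_least.1.
Qed.

End Kleene.

Definition psum (g : nat -> M) (n : nat) : M := \big[madd/mzero]_(0 <= y < n) g y.
Definition isum (g : nat -> M) : M := lub (psum g).

Lemma psum_asc g : ascending madd (psum g).
Proof. by move=> n; rewrite /psum big_nat_recr //; exists (g n). Qed.

Lemma isum_lub g : is_lub madd (psum g) (isum g).
Proof. exact: lub_spec (psum_asc g). Qed.

Lemma isum_split g g1 g2 : (forall y, g y = madd (g1 y) (g2 y)) ->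
  isum g = madd (isum g1) (isum g2).
Proof.
move=> Hg; apply: is_lub_unique (isum_lub _) _.
have -> : psum g = (fun n => madd (psum g1 n) (psum g2 n)).
  by apply: functional_extensionality => n; rewrite /psum -big_split; apply: eq_bigr.
exact: lub_add (psum_asc _) (psum_asc _) (isum_lub _) (isum_lub _).
Qed.

Lemma isum_fin g (S : {fset nat}) : (forall y, y \notin S -> g y = mzero) ->
  isum g = \big[madd/mzero]_(y <- enum_fset S) g y.
Proof.
move=> Hg; apply: is_lub_unique (isum_lub _) _.
apply: (@lub_eventually _ (\max_(y <- enum_fset S) y.+1)); first exact: psum_asc.
move=> n HN; rewrite /psum.
have -> : \big[madd/mzero]_(0 <= y < n) g y =
          \big[madd/mzero]_(0 <= y < n | y \in S) g y.
  rewrite [RHS]big_mkcond /=; apply: eq_bigr => y _; case: ifP => // /negbT; exact: Hg.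
rewrite -big_filter; apply: perm_big; apply: uniq_perm.
- by rewrite filter_uniq // iota_uniq.
- exact: fset_uniq.
move=> y; rewrite mem_filter mem_iota add0n subn0 /=.
case Hy: (y \in S) => //=; apply: leq_trans HN.
exact: (@leq_bigmax_seq _ _ xpredT (fun y => y.+1)).
Qed.

(* The inflow of x is the infinite sum of the inflow along all pairs (y, x);
   terms with y inside the graph vanish. *)
Lemma inflowE (h : flowGraph M) x : inflow h x = isum (fun y => fg_in h y x).
Proof.
rewrite /inflow /isum; congr lub; apply: functional_extensionality => n.
rewrite msumE big_filter /psum /index_iota subn0.
rewrite [RHS](bigID (fun y => y \notin fg_X h)) /= [X in madd _ X]big1 ?addm0 // => y.
by rewrite negbK => Hy; apply: fg_inout; rewrite Hy.
Qed.

Lemma fg_ext (h h' : flowGraph M) :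
  fg_X h = fg_X h' -> fg_E h = fg_E h' -> fg_in h = fg_in h' -> h = h'.
Proof.
case: h => X E i c1 c2 c3; case: h' => X' E' i' c1' c2' c3' /= HX HE Hi.
by subst; f_equal; apply: proof_irrelevance.
Qed.

Lemma union_assoc (h1 h2 h3 : flowGraph M) :
  fg_union h1 (fg_union h2 h3) = fg_union (fg_union h1 h2) h3.
Proof.
apply: fg_ext => /=; first by rewrite fsetUA.
  apply: functional_extensionality => x; apply: functional_extensionality => y.
  rewrite /union_E /= in_fsetU /union_E.
  by case: (x \in fg_X h1); case: (x \in fg_X h2).
apply: functional_extensionality => y; apply: functional_extensionality => x.
rewrite /union_in /= !in_fsetU /union_in /= !in_fsetU.
by case: (y \in fg_X h1); case: (y \in fg_X h2); case: (y \in fg_X h3);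
   case: (x \in fg_X h1); case: (x \in fg_X h2); case: (x \in fg_X h3).
Qed.

Lemma union_comm (h1 h2 : flowGraph M) :
  [disjoint fg_X h1 & fg_X h2] -> fg_union h1 h2 = fg_union h2 h1.
Proof.
move=> /fdisjointP D; apply: fg_ext => /=; first by rewrite fsetUC.
  apply: functional_extensionality => x; apply: functional_extensionality => y.
  rewrite /union_E; case H1: (x \in fg_X h1); case H2: (x \in fg_X h2) => //.
  - by move: (D x H1); rewrite H2.
  - by rewrite !fg_Eout ?H1 ?H2.
apply: functional_extensionality => y; apply: functional_extensionality => x.
rewrite /union_in /= [fg_X h2 `|` _]fsetUC; case: ifP => // /andP [_ Hx].
case H1: (x \in fg_X h1); case H2: (x \in fg_X h2) => //.
  by move: (D x H1); rewrite H2.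
by move: Hx; rewrite in_fsetU H1 H2.
Qed.

Lemma union_unit (h : flowGraph M) : fg_union (fg_empty M) h = h.
Proof.
apply: fg_ext => //=; first by rewrite fset0U.
apply: functional_extensionality => y; apply: functional_extensionality => x.
rewrite /union_in /= fset0U; case: ifP => // /negbT; rewrite negb_and negbK => H.
by rewrite fg_inout.
Qed.

Lemma union_E_l (h1 h2 : flowGraph M) x :
  x \in fg_X h1 -> fg_E (fg_union h1 h2) x = fg_E h1 x.
Proof. by rewrite /= /union_E => ->. Qed.

Lemma union_E_r (h1 h2 : flowGraph M) x :
  x \notin fg_X h1 -> fg_E (fg_union h1 h2) x = fg_E h2 x.
Proof. by rewrite /= /union_E => /negbTE ->. Qed.

Lemma union_in_l (h1 h2 : flowGraph M) y x :
  y \notin fg_X h1 `|` fg_X h2 -> x \in fg_X h1 ->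
  fg_in (fg_union h1 h2) y x = fg_in h1 y x.
Proof. by move=> Hy Hx; rewrite /= /union_in Hy in_fsetU Hx. Qed.

Lemma union_in_r (h1 h2 : flowGraph M) y x :
  y \notin fg_X h1 `|` fg_X h2 -> x \notin fg_X h1 ->
  x \in fg_X h2 -> fg_in (fg_union h1 h2) y x = fg_in h2 y x.
Proof.
by move=> Hy /negbTE Hx1 Hx2; rewrite /= /union_in Hy in_fsetU Hx1 Hx2.
Qed.

Lemma big_fsetU (A B : {fset nat}) (F : nat -> M) : [disjoint A & B] ->
  \big[madd/mzero]_(y <- enum_fset (A `|` B)) F y =
  madd (\big[madd/mzero]_(y <- enum_fset A) F y)
       (\big[madd/mzero]_(y <- enum_fset B) F y).
Proof.
move=> /fdisjointP D; rewrite -big_cat; apply: perm_big; apply: uniq_perm.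
- exact: fset_uniq.
- rewrite cat_uniq !fset_uniq /= andbT; apply/hasPn => y Hy.
  by apply/negP => /D; rewrite Hy.
by move=> y; rewrite mem_cat; exact: in_fsetU.
Qed.

Lemma edge_sum_union (h1 h2 : flowGraph M) a x :
  [disjoint fg_X h1 & fg_X h2] ->
  edge_sum (fg_union h1 h2) a x = madd (edge_sum h1 a x) (edge_sum h2 a x).
Proof.
move=> D; rewrite /edge_sum big_fsetU //; congr madd.
  by apply: eq_big_seq => y Hy; rewrite union_E_l.
apply: eq_big_seq => y Hy; rewrite union_E_r //.
by apply/negP => /(fdisjointP D); rewrite Hy.
Qed.

Lemma inflow_union (h1 h2 : flowGraph M) x :
  [disjoint fg_X h1 & fg_X h2] -> x \in fg_X h1 ->
  inflow h1 x = madd (inflow (fg_union h1 h2) x)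
                     (\big[madd/mzero]_(y <- enum_fset (fg_X h2)) fg_in h1 y x).
Proof.
move=> /fdisjointP D Hx; rewrite !inflowE.
pose from2 y := if y \in fg_X h2 then fg_in h1 y x else mzero.
rewrite (@isum_split _ (fun y => fg_in (fg_union h1 h2) y x) from2).
  rewrite (@isum_fin from2 (fg_X h2)) => [|y /negbTE Hy]; last by rewrite /from2 Hy.
  by congr madd; apply: eq_big_seq => y Hy; rewrite /from2 Hy.
move=> y; rewrite /from2 /= /union_in in_fsetU Hx /=.
case Hy2: (y \in fg_X h2); first by rewrite orbT /= add0m.
rewrite orbF addm0; case Hy1: (y \in fg_X h1) => /=; first by rewrite fg_inout // Hy1.
by rewrite in_fsetU Hx.
Qed.

Lemma composable_flow_l (h1 h2 : flowGraph M) x :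
  composable h1 h2 -> x \in fg_X h1 ->
  flow h1 x = flow (fg_union h1 h2) x.
Proof. by move=> [_ F] Hx; move: (F x); rewrite in_fsetU Hx => /(_ isT). Qed.

Lemma composable_flow_r (h1 h2 : flowGraph M) x :
  composable h1 h2 -> x \in fg_X h2 ->
  flow h2 x = flow (fg_union h1 h2) x.
Proof.
move=> [[D _] F] Hx.
have Hx1 : x \notin fg_X h1 by apply/negP => /(fdisjointP D); rewrite Hx.
by move: (F x); rewrite in_fsetU Hx orbT (negbTE Hx1) => /(_ isT).
Qed.

(* Composability is symmetric, since disjoint union is commutative. *)
Lemma composable_sym (h1 h2 : flowGraph M) : composable h1 h2 -> composable h2 h1.
Proof.
move=> [[D [Out12 Out21]] F]; split; first by split; [rewrite fdisjoint_sym | split].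
move=> x Hx; rewrite -(union_comm D) -F; last by rewrite fsetUC.
case: ifP => H2; case: ifP => H1 //.
  by move: (fdisjointP D x H1); rewrite H2.
by move: Hx; rewrite in_fsetU H1 H2.
Qed.

Lemma composable_unit (h : flowGraph M) : composable (fg_empty M) h.
Proof.
split; first by split; [exact: fdisjoint0X | split => x y; rewrite in_fset0].
by move=> x _; rewrite union_unit in_fset0.
Qed.

Section FlowRestriction.
Variables A B : flowGraph M.
Hypothesis disjAB : [disjoint fg_X A & fg_X B].
Local Notation U := (fg_union A B).
Hypothesis inflow_from_B : forall x y, x \in fg_X A -> y \in fg_X B ->
  fg_in A y x = fg_E B y x (flow U y).

Lemma inflow_part x : x \in fg_X A ->
  inflow A x = madd (inflow U x) (edge_sum B (flow U) x).
Proof.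
move=> Hx; rewrite (inflow_union disjAB Hx); congr madd.
by apply: eq_big_seq => y Hy; apply: inflow_from_B.
Qed.

Lemma union_flow_solves_part x : x \in fg_X A -> flow U x = flow_step A (flow U) x.
Proof.
move=> Hx; have HxU : x \in fg_X U by rewrite /= in_fsetU Hx.
rewrite [LHS](flow_fix HxU) /flow_step edge_sum_union // inflow_part //.
by rewrite maddA maddAC.
Qed.

Lemma flow_part_le_union x : x \in fg_X A -> mle (flow A x) (flow U x).
Proof.
by apply: flow_le => y Hy; apply: mle_eq; rewrite -union_flow_solves_part.
Qed.

Definition patched_flow (y : nat) : M :=
  if y \in fg_X A then flow A y else flow U y.

(* The patched flow is a pre-fixpoint of the flow equation of the union: it
   solves it on A, and lies below the union flow elsewhere. *)
Lemma patched_flow_prefix x :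
  x \in fg_X U -> mle (flow_step U patched_flow x) (patched_flow x).
Proof.
move=> HxU; rewrite {2}/patched_flow; case: ifP => HxA.
  apply: mle_eq; rewrite (flow_fix HxA) /flow_step edge_sum_union // inflow_part //.
  rewrite (@eq_edge_sum A patched_flow (flow A)) => [|y Hy]; last first.
    by rewrite /patched_flow Hy.
  rewrite (@eq_edge_sum B patched_flow (flow U)) => [|y Hy]; last first.
    have HyA : y \notin fg_X A by apply/negP => /(fdisjointP disjAB); rewrite Hy.
    by rewrite /patched_flow (negbTE HyA).
  by rewrite maddA maddAC.
apply: mle_trans (mle_eq (esym (flow_fix HxU))).
apply: flow_step_mono => y Hy; rewrite /patched_flow.
by case: ifP => HyA; [apply: flow_part_le_union | apply: mle_refl].
Qed.

Lemma flow_restrict x : x \in fg_X A -> flow A x = flow U x.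
Proof.
move=> HxA; apply: fm_antisym; first exact: flow_part_le_union.
have HxU : x \in fg_X U by rewrite /= in_fsetU HxA.
by have := flow_le patched_flow_prefix HxU; rewrite /patched_flow HxA.
Qed.

End FlowRestriction.

(* All component flows agree with the
   flow of the triple union; for h1 ⊎ h2 this is the restriction lemma. *)

Section AssocForward.
Variables h1 h2 h3 : flowGraph M.
Hypothesis comp23 : composable h2 h3.
Hypothesis comp1_23 : composable h1 (fg_union h2 h3).
Local Notation U := (fg_union h1 (fg_union h2 h3)).

Lemma disj23 : [disjoint fg_X h2 & fg_X h3].
Proof. by case: comp23 => [[]]. Qed.

Lemma disj1_23 : [disjoint fg_X h1 & fg_X h2 `|` fg_X h3].
Proof. by case: comp1_23 => [[]]. Qed.

Lemma disj12 : [disjoint fg_X h1 & fg_X h2].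
Proof. by move: disj1_23; rewrite fdisjointXU => /andP []. Qed.

Lemma disj12_3 : [disjoint fg_X h1 `|` fg_X h2 & fg_X h3].
Proof.
by rewrite fdisjointUX disj23 andbT; move: disj1_23; rewrite fdisjointXU => /andP [].
Qed.

Lemma flow1_U x : x \in fg_X h1 -> flow h1 x = flow U x.
Proof. exact: composable_flow_l comp1_23. Qed.

Lemma flow23_U x : x \in fg_X h2 `|` fg_X h3 -> flow (fg_union h2 h3) x = flow U x.
Proof. exact: composable_flow_r comp1_23. Qed.

Lemma flow2_U x : x \in fg_X h2 -> flow h2 x = flow U x.
Proof. by move=> Hx; rewrite (composable_flow_l comp23 Hx) flow23_U // in_fsetU Hx. Qed.

Lemma flow3_U x : x \in fg_X h3 -> flow h3 x = flow U x.
Proof.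
by move=> Hx; rewrite (composable_flow_r comp23 Hx) flow23_U // in_fsetU Hx orbT.
Qed.

Lemma inflow12_from3 x y : x \in fg_X h1 `|` fg_X h2 -> y \in fg_X h3 ->
  fg_in (fg_union h1 h2) y x = fg_E h3 y x (flow U y).
Proof.
move=> Hx Hy; have Hy12 := fdisjointP_sym disj12_3 y Hy.
case: (boolP (x \in fg_X h1)) => Hx1.
  have Hy23 : y \in fg_X (fg_union h2 h3) by rewrite /= in_fsetU Hy orbT.
  case: comp1_23 => [[_ [_ Out23_1]] _].
  rewrite union_in_l // -(Out23_1 y x Hy23 Hx1) /outflow flow23_U //.
  by rewrite union_E_r //; apply: fdisjointP_sym disj23 y Hy.
have Hx2 : x \in fg_X h2 by move: Hx; rewrite in_fsetU (negbTE Hx1).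
case: comp23 => [[_ [_ Out3_2]] _].
by rewrite union_in_r // -(Out3_2 y x Hy Hx2) /outflow flow3_U.
Qed.

Lemma flow12_U x : x \in fg_X h1 `|` fg_X h2 -> flow (fg_union h1 h2) x = flow U x.
Proof.
move=> Hx; rewrite union_assoc.
apply: (@flow_restrict (fg_union h1 h2) h3 disj12_3) Hx => x' y Hx' Hy.
by rewrite -union_assoc; apply: inflow12_from3.
Qed.

Lemma composable12 : composable h1 h2.
Proof.
case: comp1_23 => [[_ [Out1_23 Out23_1]] _].
split; first split; [exact: disj12 | split |].
- move=> x y Hx Hy; have Hy23 : y \in fg_X (fg_union h2 h3) by rewrite /= in_fsetU Hy.
  rewrite (Out1_23 x y Hx Hy23); exact: union_in_l (fdisjointP disj1_23 x Hx) Hy.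
- move=> y x Hy Hx; have Hy23 : y \in fg_X (fg_union h2 h3) by rewrite /= in_fsetU Hy.
  rewrite -(Out23_1 y x Hy23 Hx) /outflow union_E_l //.
  by rewrite (composable_flow_l comp23 Hy).
- move=> x Hx; rewrite flow12_U //.
  case: ifP => Hx1; first exact: flow1_U.
  by apply: flow2_U; move: Hx; rewrite in_fsetU Hx1.
Qed.

Lemma composable12_3 : composable (fg_union h1 h2) h3.
Proof.
split; first split; [exact: disj12_3 | split |].
- move=> x y Hx Hy; rewrite /outflow flow12_U //.
  case: (boolP (x \in fg_X h1)) => Hx1.
    rewrite union_E_l // -flow1_U //.
    have Hy23 : y \in fg_X (fg_union h2 h3) by rewrite /= in_fsetU Hy orbT.
    case: comp1_23 => [[_ [Out1_23 _]] _].
    have := Out1_23 x y Hx1 Hy23; rewrite /outflow => ->.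
    exact: union_in_r (fdisjointP disj1_23 x Hx1) (fdisjointP_sym disj23 y Hy) Hy.
  have Hx2 : x \in fg_X h2 by move: Hx; rewrite /= in_fsetU (negbTE Hx1).
  rewrite union_E_r // -flow2_U //.
  by case: comp23 => [[_ [Out2_3 _]] _]; apply: Out2_3.
- by move=> y x Hy Hx; rewrite inflow12_from3 // /outflow flow3_U.
- move=> x Hx; rewrite -union_assoc.
  case: ifP => Hx12; first exact: flow12_U.
  by apply: flow3_U; move: Hx; rewrite in_fsetU Hx12.
Qed.

End AssocForward.

Lemma assoc_backward (h1 h2 h3 : flowGraph M) :
  composable h1 h2 -> composable (fg_union h1 h2) h3 ->
  composable h2 h3 /\ composable h1 (fg_union h2 h3).
Proof.
move=> comp12 comp12_3; have [[D12 _] _] := comp12.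
have comp3_21 : composable h3 (fg_union h2 h1).
  by rewrite -(union_comm D12); apply: composable_sym.
have comp32 := composable12 (composable_sym comp12) comp3_21.
have comp32_1 := composable12_3 (composable_sym comp12) comp3_21.
have [[D32 _] _] := comp32; split; first exact: composable_sym.
by rewrite -(union_comm D32); apply: composable_sym.
Qed.

End FlowGraphTheory.

Theorem lemma2 (M : flowMonoid) :
  (* commutativity *)
  (forall h1 h2 : flowGraph M,
      (composable h1 h2 <-> composable h2 h1) /\
      (composable h1 h2 -> fg_union h1 h2 = fg_union h2 h1)) /\
  (* associativity *)
  (forall h1 h2 h3 : flowGraph M,
      ((composable h2 h3 /\ composable h1 (fg_union h2 h3)) <->
       (composable h1 h2 /\ composable (fg_union h1 h2) h3)) /\
      (composable h2 h3 -> composable h1 (fg_union h2 h3) ->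
       fg_union h1 (fg_union h2 h3) = fg_union (fg_union h1 h2) h3)) /\
  (* unit *)
  (forall h : flowGraph M,
      composable (fg_empty M) h /\ fg_union (fg_empty M) h = h).
Proof.
split.
  move=> h1 h2; split; first by split; apply: composable_sym.
  by case=> [[D _] _]; apply: union_comm.
split.
  move=> h1 h2 h3; split; last by move=> _ _; apply: union_assoc.
  split=> [[comp23 comp1_23] | [comp12 comp12_3]]; last exact: assoc_backward.
  by split; [apply: composable12 comp1_23 | apply: composable12_3 comp1_23].
by move=> h; split; [apply: composable_unit | apply: union_unit].
Qed.
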